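(* Let $N \ge 1$ and let $\rho_1, \rho_2$ be $N \times N$ density matrices (positive semidefinite complex matrices with unit trace). Then $$1 - G(\rho_1,\rho_2) \le D_{\mathrm{tr}}(\rho_1,\rho_2),$$ where $D_{\mathrm{tr}}(\rho_1,\rho_2) = \frac{1}{2}\mathrm{tr}|\rho_1-\rho_2|$ and $G(\rho_1,\rho_2) = \mathrm{tr}\,\rho_1\rho_2 + \sqrt{1-\mathrm{tr}\,\rho_1^2}\,\sqrt{1-\mathrm{tr}\,\rho_2^2}$. Equivalently, $$\frac{1}{2}\mathrm{tr}|\rho_1-\rho_2| + \mathrm{tr}\,\rho_1\rho_2 + \sqrt{1-\mathrm{tr}\,\rho_1^2}\,\sqrt{1-\mathrm{tr}\,\rho_2^2} \ge 1.$$
   Context: For a Hermitian matrix $A$, $|A| = \sqrt{A^2}$, so $\mathrm{tr}|A|$ is the sum of the absolute values of the eigenvalues of $A$. $D_{\mathrm{tr}}$ is called the trace distance and $G$ the superfidelity. *)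

(* Complex numbers are R[i] for R : rcfType (real closed
   field), via mathcomp-real-closed; R[i] is a numClosedFieldType. *)
From HB Require Import structures.
From mathcomp Require Import all_boot all_order all_algebra.
From mathcomp Require Import complex.
Set Implicit Arguments. Unset Strict Implicit. Unset Printing Implicit Defensive.
Import Order.TTheory GRing.Theory Num.Theory.
Local Open Scope ring_scope.

Section Defs.
Variable C : numClosedFieldType.

Definition adjmx {m n} (A : 'M[C]_(m, n)) : 'M[C]_(n, m) := (map_mx Num.conj A)^T.

Definition hermitian {n} (A : 'M[C]_n) : Prop := adjmx A = A.

Definition psd {n} (A : 'M[C]_n) : Prop :=
  hermitian A /\ forall v : 'cV[C]_n, 0 <= (adjmx v *m A *m v) 0 0.

Definition density_matrix {n} (A : 'M[C]_n) : Prop := psd A /\ \tr A = 1.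

(* the eigenvalues of A, with algebraic multiplicity (roots of the
   characteristic polynomial, which splits since C is algebraically closed) *)
Definition eigenvalues {n} (A : 'M[C]_n) : seq C :=
  sval (closed_field_poly_normal (char_poly A)).

(* tr|A| = sum of absolute values of the eigenvalues (for Hermitian A) *)
Definition trabs {n} (A : 'M[C]_n) : C := \sum_(z <- eigenvalues A) `|z|.

Definition Dtr {n} (r1 r2 : 'M[C]_n) : C := 2^-1 * trabs (r1 - r2).

Definition superfid {n} (r1 r2 : 'M[C]_n) : C :=
  \tr (r1 *m r2) + sqrtC (1 - \tr (r1 *m r1)) * sqrtC (1 - \tr (r2 *m r2)).
End Defs.

From Pilot Require Import Defs.
From HB Require Import structures.
From mathcomp Require Import all_boot all_order all_algebra.
From mathcomp Require Import complex spectral.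
From mathcomp Require Import sesquilinear.
Import Order.TTheory GRing.Theory Num.Theory.
Set Implicit Arguments. Unset Strict Implicit. Unset Printing Implicit Defensive.
Local Open Scope ring_scope.

(** Diagonalise the Hermitian matrix H = r1 - r2 in an orthonormal basis as
    diag(d_i).  For a density matrix X the diagonal entries y_i of X in that
    basis lie in [0, 1], so |tr(H X) - tr H / 2| = |sum_i d_i (y_i - 1/2)| is
    at most (1/2) sum_i |d_i| = D_tr(r1, r2).  As tr H = 0, this gives
    tr r1^2 - tr r1 r2 <= D_tr and tr r2^2 - tr r1 r2 <= D_tr.  Finally, if
    s_k = sqrt(1 - tr r_k^2) and, say, s_1 <= s_2, then
    1 - s_1 s_2 <= 1 - s_1^2 = tr r1^2, so 1 - G <= tr r1^2 - tr r1 r2. *)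

Lemma real_mul_centered_bound (R : numDomainType) (d y t : R) :
  d \is Num.real -> 0 <= y <= t ->
  - (`|d| * t) <= d * (2 * y - t) <= `|d| * t.
Proof.
move=> dR /andP[y0 yt]; have t0 : 0 <= t := le_trans y0 yt.
have cR : 2 * y - t \is Num.real by rewrite rpredB ?rpredM ?ger0_real.
rewrite -real_ler_norml ?rpredM // normrM ler_wpM2l //.
rewrite real_ler_norml // lerBrDr addNr lerBlDr mulr_ge0 //=.
by rewrite -[t + t]mulr2n -[t *+ 2]mulr_natl; apply: ler_wpM2l.
Qed.

Lemma one_sub_mul_sqrtC_le (C : numClosedFieldType) (a b : C) :
  a <= 1 -> b <= 1 ->
  1 - sqrtC (1 - a) * sqrtC (1 - b) <= a \/
  1 - sqrtC (1 - a) * sqrtC (1 - b) <= b.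
Proof.
rewrite -subr_ge0 => a1; rewrite -subr_ge0 => b1.
have [sa0 sb0] : 0 <= sqrtC (1 - a) /\ 0 <= sqrtC (1 - b) by rewrite !sqrtC_ge0.
rewrite [_ <= a]lerBlDr [_ <= b]lerBlDr -[_ <= a + _]lerBlDl -[_ <= b + _]lerBlDl.
have [le_ab|/ltW le_ba] := real_leP (ger0_real sa0) (ger0_real sb0); [left|right].
- by rewrite -{1}(sqrtCK (1 - a)) expr2; apply: ler_wpM2l.
- by rewrite -{1}(sqrtCK (1 - b)) expr2 [sqrtC (1 - a) * _]mulrC; apply: ler_wpM2l.
Qed.

Section SpectralTrace.
Variable C : numClosedFieldType.
Local Open Scope sesquilinear_scope.

Lemma adjmxE m n (A : 'M[C]_(m, n)) : adjmx A = A ^t*.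
Proof. by rewrite /adjmx map_trmx. Qed.

Lemma hermitian_hermsymmx n (H : 'M[C]_n) : Defs.hermitian H -> H \is hermsymmx.
Proof.
by rewrite /Defs.hermitian adjmxE => hH; apply/is_hermitianmxP; rewrite expr0 scale1r hH.
Qed.

Lemma unitarymx_adjK n (P : 'M[C]_n) : P \is unitarymx -> P^t* *m P = 1%:M.
Proof. by move=> PU; rewrite -[LHS]mul1mx mulmxA mulmxKtV. Qed.

Variable n : nat.
Implicit Types P H X : 'M[C]_n.

Lemma hermitian_spectralE H : Defs.hermitian H ->
  H = (spectralmx H)^t* *m diag_mx (spectral_diag H) *m spectralmx H.
Proof.
move=> /hermitian_hermsymmx/hermitian_normalmx/orthomx_spectralP {1}->.
by rewrite invmx_unitary // spectral_unitarymx.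
Qed.

Lemma hermitian_spectral_diag_realE H i :
  Defs.hermitian H -> spectral_diag H 0 i \is Num.real.
Proof. by move=> /hermitian_hermsymmx/hermitian_spectral_diag_real/mxOverP. Qed.

Lemma char_poly_unitary_conj P (D : 'M[C]_n) : P \is unitarymx ->
  char_poly (P^t* *m D *m P) = char_poly D.
Proof.
move=> /unitarymx_adjK PP.
have conj_char_poly_mx : char_poly_mx (P^t* *m D *m P) =
    map_mx polyC (P^t*) *m char_poly_mx D *m map_mx polyC P.
  rewrite /char_poly_mx mulmxBr mulmxBl -!map_mxM scalar_mxC -!mulmxA.
  by rewrite -map_mxM PP map_mx1 mulmx1 mulmxA.
have detPP : (\det P^T)^* * \det P = 1.
  by rewrite -(det_map_mx Num.conj) -det_mulmx PP det1.
rewrite /char_poly conj_char_poly_mx !det_mulmx !det_map_mx mulrC mulrA -rmorphM.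
by rewrite [_ * _^*]mulrC detPP rmorph1 mul1r.
Qed.

Lemma trabs_spectral H : Defs.hermitian H ->
  trabs H = \sum_i `|spectral_diag H 0 i|.
Proof.
move=> hH; rewrite /trabs /eigenvalues; case: closed_field_poly_normal => s /=.
rewrite (monicP (char_poly_monic H)) scale1r {1}(hermitian_spectralE hH).
rewrite char_poly_unitary_conj ?spectral_unitarymx // char_poly_trig ?diag_mx_is_trig //.
move=> char_polyE.
suff s_perm : perm_eq s [seq spectral_diag H 0 i | i <- index_enum 'I_n].
  by rewrite (perm_big _ s_perm) big_map.
apply: prod_XsubC_eq; rewrite -char_polyE big_map.
by apply: eq_bigr => i _; rewrite mxE eqxx mulr1n.
Qed.

Lemma mxtrace_hermitian_mul H X : Defs.hermitian H -> \tr (H *m X) =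
  \sum_i spectral_diag H 0 i * (spectralmx H *m X *m (spectralmx H)^t*) i i.
Proof.
move=> hH; rewrite {1}(hermitian_spectralE hH) -!mulmxA mxtrace_mulC -!mulmxA.
by rewrite mul_diag_mx; apply: eq_bigr => i _; rewrite !mxE.
Qed.

Lemma mxtrace_spectral H : Defs.hermitian H -> \tr H = \sum_i spectral_diag H 0 i.
Proof.
move=> /(mxtrace_hermitian_mul 1%:M).
rewrite !mulmx1 (unitarymxP (spectral_unitarymx H)) => ->.
by apply: eq_bigr => i _; rewrite mxE eqxx mulr1.
Qed.

Lemma mxtrace_unitary_conj P X : P \is unitarymx -> \tr (P *m X *m P^t*) = \tr X.
Proof. by move=> /unitarymx_adjK PP; rewrite mxtrace_mulC mulmxA PP mul1mx. Qed.

Lemma psd_conj_diag_ge0 (P : 'M[C]_n) X i : psd X -> 0 <= (P *m X *m P^t*) i i.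
Proof.
case=> _ /(_ ((row i P)^t*)); rewrite adjmxE trmxCK.
suff -> : (row i P *m X *m (row i P)^t*) 0 0 = (P *m X *m P^t*) i i by [].
rewrite !mxE; apply: eq_bigr => j _; rewrite !mxE; congr (_ * _).
by apply: eq_bigr => k _; rewrite !mxE.
Qed.

Lemma psd_spectral_diag_ge0 X i : psd X -> 0 <= spectral_diag X 0 i.
Proof.
move=> pX; have := psd_conj_diag_ge0 (spectralmx X) i pX.
have UU := unitarymxP (spectral_unitarymx X).
rewrite [X in _ *m X *m _](hermitian_spectralE pX.1) !mulmxA UU mul1mx -mulmxA UU.
by rewrite mulmx1 mxE eqxx mulr1n.
Qed.

Lemma trabs_psd X : psd X -> trabs X = \tr X.
Proof.
move=> pX; have hX := pX.1; rewrite trabs_spectral // mxtrace_spectral //.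
by apply: eq_bigr => i _; rewrite ger0_norm ?psd_spectral_diag_ge0.
Qed.

Lemma mxtrace_mul_bound H X : Defs.hermitian H -> psd X ->
  - (trabs H * \tr X) <= 2 * \tr (H *m X) - \tr H * \tr X <= trabs H * \tr X.
Proof.
move=> hH pX; set P := spectralmx H; set d := spectral_diag H.
set y := fun i => (P *m X *m P^t*) i i.
have trXE : \tr X = \sum_i y i.
  by rewrite -(mxtrace_unitary_conj X (spectral_unitarymx H)).
have y_bound i : 0 <= y i <= \tr X.
  rewrite psd_conj_diag_ge0 //= trXE (bigD1 i) //= lerDl.
  by apply: sumr_ge0 => j _; apply: psd_conj_diag_ge0.
have -> : 2 * \tr (H *m X) - \tr H * \tr X = \sum_i d 0 i * (2 * y i - \tr X).
  rewrite mxtrace_hermitian_mul // mxtrace_spectral // mulr_sumr mulr_suml -sumrB.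
  by apply: eq_bigr => i _; rewrite mulrBr mulrCA.
rewrite trabs_spectral // mulr_suml -sumrN; apply/andP; split; apply: ler_sum => i _;
  by have /andP[] := real_mul_centered_bound
    (hermitian_spectral_diag_realE i hH) (y_bound i).
Qed.

Lemma density_mxtrace_sqr_le1 X : density_matrix X -> \tr (X *m X) <= 1.
Proof.
case=> pX trX1; have /andP[_] := mxtrace_mul_bound pX.1 pX.
have one_add_one : 1 + 1 = 2 * 1 :> C by rewrite mulr1.
by rewrite trabs_psd // trX1 !mulr1 lerBlDr one_add_one ler_pM2l ?ltr0n.
Qed.

Lemma density_one_sub_superfid_le_Dtr (r1 r2 : 'M[C]_n) :
  density_matrix r1 -> density_matrix r2 -> 1 - superfid r1 r2 <= Dtr r1 r2.
Proof.
move=> d1 d2; have [[p1 tr1] [p2 tr2]] := (d1, d2).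
have hD : Defs.hermitian (r1 - r2).
  by rewrite /Defs.hermitian /adjmx map_mxB linearB /= -!/(adjmx _) p1.1 p2.1.
have trD : \tr (r1 - r2) = 0 by rewrite linearB /= tr1 tr2 subrr.
have /andP[_ bound1] := mxtrace_mul_bound hD p1.
have /andP[bound2 _] := mxtrace_mul_bound hD p2.
rewrite trD mul0r subr0 tr1 mulr1 mulmxBl linearB /= (mxtrace_mulC r2) in bound1.
rewrite trD mul0r subr0 tr2 mulr1 mulmxBl linearB /= lerNl -mulrN opprB in bound2.
rewrite /superfid /Dtr ler_pdivlMl ?ltr0n // opprD addrA addrAC.
have [gap|gap] := one_sub_mul_sqrtC_le (density_mxtrace_sqr_le1 d1)
                                       (density_mxtrace_sqr_le1 d2).
- by apply: le_trans bound1; rewrite ler_wpM2l ?ler0n ?lerD2r.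
- by apply: le_trans bound2; rewrite ler_wpM2l ?ler0n ?lerD2r.
Qed.

End SpectralTrace.

Theorem theorem1 (R : rcfType) (N : nat) (r1 r2 : 'M[R[i]]_N) :
  (1 <= N)%N -> density_matrix r1 -> density_matrix r2 ->
  1 - superfid r1 r2 <= Dtr r1 r2.
Proof. by move=> _; apply: density_one_sub_superfid_le_Dtr. Qed.
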